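(* Let $n=2$, let $O_1=\{p\in M: v_1(p)\ge v_2(p)\}$, $O_2=\{q\in M: v_1(q)<v_2(q)\}$, and assume that in the allocation $(O_1,O_2)$ agent 2 strongly envies agent 1. Let $\mathrm{OPT}$ be the maximum social welfare $v_1(A_1)+v_2(A_2)$ over all EF1 allocations $(A_1,A_2)$, and let $\mathrm{OPT}(C_2)$ be the maximum social welfare over all allocations in which agent 2 does not strongly envy agent 1. Then $\mathrm{OPT}=\mathrm{OPT}(C_2)$.
   Context: Two agents with additive valuations $v_1,v_2:2^M\to\mathbb{R}_{\ge0}$ over items $M=[m]$; an allocation $(A_1,A_2)$ is a partition of $M$. Agent $i$ strongly envies agent $j$ if $A_j\ne\emptyset$ and $v_i(A_i)<v_i(A_j\setminus\{g\})$ for every $g\in A_j$. An allocation is EF1 if neither agent strongly envies the other (an agent never strongly envies an empty bundle). *)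

From HB Require Import structures.
From mathcomp Require Import all_boot all_order all_algebra.
Set Implicit Arguments. Unset Strict Implicit. Unset Printing Implicit Defensive.
Import Order.TTheory GRing.Theory Num.Theory.
Local Open Scope ring_scope.

Definition bval (R : realFieldType) (M : finType) (v : M -> R) (S : {set M}) : R :=
  \sum_(g in S) v g.

Definition strongly_envies (R : realFieldType) (M : finType) (v : M -> R)
  (Ai Aj : {set M}) : bool :=
  (Aj != set0) && [forall g in Aj, bval v Ai < bval v (Aj :\ g)].

(* An allocation (A1, A2) of M between two agents is encoded by A1, with A2 = ~: A1. *)
Definition EF1 (R : realFieldType) (M : finType) (v1 v2 : M -> R) (A1 : {set M}) : bool :=
  ~~ strongly_envies v1 A1 (~: A1) && ~~ strongly_envies v2 (~: A1) A1.

Definition C2 (R : realFieldType) (M : finType) (v1 v2 : M -> R) (A1 : {set M}) : bool :=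
  ~~ strongly_envies v2 (~: A1) A1.

Definition welfare (R : realFieldType) (M : finType) (v1 v2 : M -> R) (A1 : {set M}) : R :=
  bval v1 A1 + bval v2 (~: A1).

(* Maximum welfare over allocations satisfying P (welfare is >= 0, and P-allocations
   exist in the uses below, so the default 0 is harmless). *)
Definition OPT_over (R : realFieldType) (M : finType) (v1 v2 : M -> R)
  (P : pred {set M}) : R :=
  \big[Num.max/0]_(A1 : {set M} | P A1) welfare v1 v2 A1.

From HB Require Import structures.
From mathcomp Require Import all_boot all_order all_algebra.
From mathcomp Require Import lra.
Import Order.TTheory GRing.Theory Num.Theory.
Local Open Scope ring_scope.

(* Take an optimal allocation A subject to C2 giving agent 1 as many items as
   possible; it suffices that agent 1 does not strongly envy agent 2.  Suppose
   she does, and let g be an item of agent 2.  Swapping the bundles strictly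
   raises agent 1's value, keeps C2 when v2 (~: A :\ g) <= v2 A, and then
   strictly raises welfare when also v2 g + v2 (~: A :\ g) <= v1 g + v2 A,
   contradicting optimality.  If some item g of agent 2 has v2 g <= v1 g,
   moving it to agent 1 does not lower welfare, so by maximality of #|A| it
   breaks C2, which gives v2 (~: A :\ g) < v2 A.  Otherwise ~: A is inside O2
   and O1 inside A, so the strong envy of O2 towards O1 gives v2 (~: A) < v2 A. *)

Lemma setCU1 (T : finType) (A : {set T}) x : ~: (x |: A) = ~: A :\ x.
Proof. by rewrite setCU setDE setIC. Qed.

Section Valuations.
Context {R : realFieldType} {M : finType} {v : M -> R}.

Lemma bvalD1 {A : {set M}} {g : M} : g \in A -> bval v A = v g + bval v (A :\ g).
Proof.
move=> gA; rewrite /bval (bigD1 g gA) /=; congr (_ + _).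
by apply: eq_bigl => x; rewrite !inE andbC.
Qed.

Hypothesis v_ge0 : forall g, 0 <= v g.

Lemma bval_ge0 (A : {set M}) : 0 <= bval v A.
Proof. exact: sumr_ge0. Qed.

Lemma le_bval {A B : {set M}} : A \subset B -> bval v A <= bval v B.
Proof.
move=> sAB; rewrite /bval [X in _ <= X](big_setID A) /= (setIidPr sAB).
by rewrite lerDl sumr_ge0.
Qed.

Lemma strongly_envies_lt {Ai Aj : {set M}} :
  strongly_envies v Ai Aj -> bval v Ai < bval v Aj.
Proof.
case/andP=> /set0Pn[g gAj] /forallP/(_ g); rewrite gAj /= => lt_g.
exact: lt_le_trans lt_g (le_bval (subD1set Aj g)).
Qed.

End Valuations.

Section Optimum.
Context {R : realFieldType} {M : finType} {v1 v2 : M -> R}.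
Implicit Types (P Q : pred {set M}) (A : {set M}).

Lemma OPT_over_ge0 P : 0 <= OPT_over v1 v2 P.
Proof.
apply: (big_rec (fun y => 0 <= y)) => // A y _ y_ge0.
by rewrite le_max y_ge0 orbT.
Qed.

Lemma le_OPT_over {P A} : P A -> welfare v1 v2 A <= OPT_over v1 v2 P.
Proof. by move=> PA; rewrite /OPT_over (bigD1 A PA) /= le_max lexx. Qed.

Lemma OPT_over_le P x :
  0 <= x -> (forall A, P A -> welfare v1 v2 A <= x) -> OPT_over v1 v2 P <= x.
Proof.
move=> x_ge0 le_x; apply: (big_ind (fun y => y <= x)) => // a b a_le b_le.
by rewrite ge_max a_le b_le.
Qed.

Lemma OPT_over_sub P Q :
  {subset P <= Q} -> OPT_over v1 v2 P <= OPT_over v1 v2 Q.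
Proof.
move=> sPQ; apply: OPT_over_le; first exact: OPT_over_ge0.
by move=> A /sPQ; apply: le_OPT_over.
Qed.

Lemma OPT_over_attained {P A0} : P A0 -> 0 <= welfare v1 v2 A0 ->
  exists2 A, P A & OPT_over v1 v2 P = welfare v1 v2 A.
Proof.
move=> PA0 w_ge0.
have [A PA le_wA] : exists2 A, P A & OPT_over v1 v2 P <= welfare v1 v2 A.
  apply: (big_ind (fun y => exists2 A, P A & y <= welfare v1 v2 A)).
  - by exists A0.
  - move=> a b [A PA a_le] [B PB b_le].
    by case: (leP a b) => _; [exists B | exists A].
  - by move=> A PA; exists A.
by exists A => //; apply/le_anti; rewrite le_wA le_OPT_over.
Qed.

End Optimum.

Section TwoAgents.
Variables (R : realFieldType) (M : finType) (v1 v2 : M -> R).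
Hypotheses (v1_ge0 : forall g, 0 <= v1 g) (v2_ge0 : forall g, 0 <= v2 g).
Implicit Type A : {set M}.

Lemma C2_setC {A g} :
  g \in ~: A -> bval v2 (~: A :\ g) <= bval v2 A -> C2 v1 v2 (~: A).
Proof.
move=> gA' le_g; rewrite /C2 /strongly_envies setCK negb_and negb_forall.
by apply/orP; right; apply/existsP; exists g; rewrite gA' -leNgt.
Qed.

Lemma welfare_setC_gt {A g} :
  strongly_envies v1 A (~: A) -> g \in ~: A ->
  v2 g + bval v2 (~: A :\ g) <= v1 g + bval v2 A ->
  welfare v1 v2 A < welfare v1 v2 (~: A).
Proof.
case/andP=> _ /forallP/(_ g) envy gA'; rewrite gA' /= in envy.
rewrite /welfare setCK (bvalD1 (v:=v1) gA') (bvalD1 (v:=v2) gA') => le_g; lra.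
Qed.

Lemma welfare_setU1 A g : g \notin A ->
  welfare v1 v2 (g |: A) = welfare v1 v2 A + (v1 g - v2 g).
Proof.
move=> gNA; have gA' : g \in ~: A by rewrite inE.
rewrite /welfare setCU1 (bvalD1 (setU11 g A)) setU1K // (bvalD1 (v:=v2) gA').
lra.
Qed.

Lemma C2_setU1_strict {A g} :
  g \notin A -> ~~ C2 v1 v2 (g |: A) -> bval v2 (~: A :\ g) < bval v2 A.
Proof.
move=> gNA; rewrite /C2 negbK setCU1 => /andP[_ /forallP/(_ g)].
by rewrite setU11 setU1K.
Qed.

Lemma bval_setC_lt {A} :
  strongly_envies v2 [set q | v1 q < v2 q] [set p | v2 p <= v1 p] ->
  {in ~: A, forall g, ~~ (v2 g <= v1 g)} -> bval v2 (~: A) < bval v2 A.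
Proof.
move=> envy21 only_O2.
have sub2 : ~: A \subset [set q | v1 q < v2 q].
  by apply/subsetP => x /only_O2; rewrite inE ltNge.
have sub1 : [set p | v2 p <= v1 p] \subset A.
  apply/subsetP => x; rewrite inE; apply: contraLR => xNA.
  by apply: only_O2; rewrite inE.
apply: le_lt_trans (le_bval v2_ge0 sub2) _.
exact: lt_le_trans (strongly_envies_lt v2_ge0 envy21) (le_bval v2_ge0 sub1).
Qed.

Lemma EF1_of_C2_optimal A :
  strongly_envies v2 [set q | v1 q < v2 q] [set p | v2 p <= v1 p] ->
  C2 v1 v2 A ->
  (forall B, C2 v1 v2 B -> welfare v1 v2 B <= welfare v1 v2 A) ->
  (forall B, C2 v1 v2 B -> welfare v1 v2 A <= welfare v1 v2 B -> (#|B| <= #|A|)%N) ->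
  EF1 v1 v2 A.
Proof.
move=> envy21 C2A optA maxA; rewrite /EF1 -/(C2 v1 v2 A) C2A andbT.
apply/negP => envy12.
suff [g gA' [le_g le_gv]] : exists2 g, g \in ~: A &
    bval v2 (~: A :\ g) <= bval v2 A /\
    v2 g + bval v2 (~: A :\ g) <= v1 g + bval v2 A.
  have := optA _ (C2_setC gA' le_g).
  by rewrite leNgt (welfare_setC_gt envy12 gA' le_gv).
case: (boolP [exists g in ~: A, v2 g <= v1 g]).
- case/exists_inP=> g gA' le_v21; have gNA : g \notin A by rewrite inE in gA'.
  have le_wA : welfare v1 v2 A <= welfare v1 v2 (g |: A).
    by rewrite welfare_setU1 // lerDl subr_ge0.
  have NC2 : ~~ C2 v1 v2 (g |: A).
    apply/negP => C2B; have := maxA _ C2B le_wA.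
    by rewrite cardsU1 gNA add1n ltnn.
  have lt_g := C2_setU1_strict gNA NC2.
  by exists g => //; split; [exact: ltW | exact: lerD le_v21 (ltW lt_g)].
- move/exists_inPn => only_O2.
  have lt_A := bval_setC_lt envy21 only_O2.
  have /andP[/set0Pn[g gA'] _] := envy12.
  exists g => //; rewrite -(bvalD1 (v:=v2) gA'); split.
    exact: le_trans (le_bval v2_ge0 (subD1set _ g)) (ltW lt_A).
  by rewrite (le_trans (ltW lt_A)) // lerDr.
Qed.

End TwoAgents.

Theorem lemma1 (R : realFieldType) (M : finType) (v1 v2 : M -> R)
  (hv1 : forall g, 0 <= v1 g) (hv2 : forall g, 0 <= v2 g) :
  let O1 := [set p : M | v2 p <= v1 p] in
  let O2 := [set q : M | v1 q < v2 q] in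
  strongly_envies v2 O2 O1 ->
  OPT_over v1 v2 (EF1 v1 v2) = OPT_over v1 v2 (C2 v1 v2).
Proof.
move=> O1 O2 envy21.
have C2_0 : C2 v1 v2 set0 by rewrite /C2 /strongly_envies eqxx.
have w0_ge0 : 0 <= welfare v1 v2 set0 by rewrite addr_ge0 ?bval_ge0.
have [A0 C2A0 optA0] := OPT_over_attained C2_0 w0_ge0.
pose Q B := C2 v1 v2 B && (welfare v1 v2 A0 <= welfare v1 v2 B).
have QA0 : Q A0 by rewrite /Q C2A0 lexx.
case: (@arg_maxnP _ A0 Q (fun B => #|B|) QA0) => A /andP[C2A le_A0A] maxA.
have optA B : C2 v1 v2 B -> welfare v1 v2 B <= welfare v1 v2 A.
  by move=> C2B; rewrite (le_trans _ le_A0A) // -optA0 le_OPT_over.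
have EF1A : EF1 v1 v2 A.
  apply: EF1_of_C2_optimal => // B C2B le_AB; apply: maxA.
  by rewrite /Q C2B (le_trans le_A0A).
apply/le_anti; rewrite OPT_over_sub /=; last by move=> B /andP[].
by rewrite optA0 (le_trans le_A0A) // le_OPT_over.
Qed.
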